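(* Let $\Delta=0$ be a passive orthonomic system as described in the context, and let $\mathfrak{D}_K:\mathcal{B}\to\mathcal{B}$, $\mathfrak{D}_KP=\widetilde{D_KP}$, be the intrinsic multi-differential operators, with $\mathfrak{D}_i=\mathfrak{D}_{e_i}$. Then for every $K\in\mathbb{N}^p$, \[ \mathfrak{D}_K=\mathfrak{D}_1^{K_1}\mathfrak{D}_2^{K_2}\cdots\mathfrak{D}_p^{K_p}. \]
   Context: Jet space: coordinates $x_1,\dots,x_p$, $u^1,\dots,u^q$ and derivatives $u^j_K$, $K\in\mathbb{N}^p$ a multi-index; $e_i$ is the $i$-th unit multi-index. $\mathcal{A}$ is the ring of smooth functions of finitely many coordinates. Total derivatives $D_i=\partial/\partial x_i+\sum_{j,K}u^j_{K+e_i}\,\partial/\partial u^j_K$, $D_K=D_1^{K_1}\cdots D_p^{K_p}$. Choose $n$ pairs $(i^\alpha,J^\alpha)\in\{1,\dots,q\}\times\mathbb{N}^p$, $J^\alpha\neq0$. $u^j_K$ is principal if $(j,K)=(i^\alpha,J^\alpha+L)$ for some $\alpha,L$, otherwise parametric; $\mathcal{B}\subset\mathcal{A}$ consists of functions of the $x_i$ and parametric derivatives only. Fix a ranking $\le$: a total order on $\{1,\dots,q\}\times\mathbb{N}^p$ with $(j,K)\le(j,K+L)$ and $(i,J)\le(j,K)\iff(i,J+L)\le(j,K+L)$. The system is $u^{i^\alpha}_{J^\alpha}=P^\alpha$, $P^\alpha\in\mathcal{B}$, with $\Delta^\alpha=u^{i^\alpha}_{J^\alpha}-P^\alpha$; it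 is passive orthonomic if (i) $P^\alpha$ depends only on $u^j_K$ with $(j,K)<(i^\alpha,J^\alpha)$, and (ii) $(i^\alpha,J^\alpha+K)=(i^\beta,J^\beta+L)$ implies $D_KP^\alpha=D_LP^\beta$ (modulo the system). Then each $Q\in\mathcal{A}$ has a unique reduced form $\widetilde{Q}\in\mathcal{B}$ with $\widetilde{Q}\equiv Q$ modulo the differential ideal generated by the $\Delta^\alpha$ (obtained by repeatedly substituting $u^{i^\alpha}_{J^\alpha+L}\mapsto D_LP^\alpha$ for the highest principal derivative). *)

From HB Require Import structures.
From mathcomp Require Import all_boot all_order all_algebra.
From mathcomp Require Import boolp classical_sets reals topology normedtype derive.
From Stdlib Require Import ClassicalEpsilon.
Set Implicit Arguments. Unset Strict Implicit. Unset Printing Implicit Defensive.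
Import Order.TTheory GRing.Theory Num.Theory.
Import numFieldNormedType.Exports.
Local Open Scope ring_scope.

Notation mi p := {ffun 'I_p -> nat}.
Definition madd p (K L : mi p) : mi p := [ffun j => (K j + L j)%N].
Definition munit p (i : 'I_p) : mi p := [ffun j => nat_of_bool (j == i)].
Definition mzero p : mi p := [ffun => 0%N].

(* jet coordinates: inl i = x_i,  inr (j, K) = u^j_K *)
Notation Var p q := ('I_p + 'I_q * mi p)%type.
Notation jfun R p q := ((Var p q -> R) -> R).

Section Jet.
Variables (R : realType) (p q : nat).

Definition upd (z : Var p q -> R) (v : Var p q) (t : R) : Var p q -> R :=
  fun w => if w == v then t else z w.

Definition pd (v : Var p q) (F : jfun R p q) : jfun R p q :=
  fun z => derive1 (fun t => F (upd z v t)) (z v).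
Definition pds (vs : seq (Var p q)) (F : jfun R p q) : jfun R p q := foldr pd F vs.

Definition depends_on (S : seq (Var p q)) (F : jfun R p q) :=
  forall z z' : Var p q -> R, (forall w, w \in S -> z w = z' w) -> F z = F z'.

Definition Cinf (S : seq (Var p q)) (F : jfun R p q) :=
  depends_on S F /\ forall vs : seq (Var p q),
    (forall v (z : Var p q -> R), derivable (fun t => pds vs F (upd z v t)) (z v) 1) /\
    (forall (z : Var p q -> R) (e : R), 0 < e -> exists2 d : R, 0 < d &
       forall z' : Var p q -> R, (forall w, w \in S -> `|z' w - z w| < d) ->
         `|pds vs F z' - pds vs F z| < e).

Definition inA (F : jfun R p q) := exists S, Cinf S F.

(* a finite list of coordinates F depends on (for F in A) *)
Definition supp (F : jfun R p q) : seq (Var p q) :=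
  epsilon (inhabits [::]) (fun S => depends_on S F).

Definition tcoef (i : 'I_p) (v : Var p q) (z : Var p q -> R) : R :=
  match v with
  | inl _ => 0
  | inr (j, K) => z (inr (j, madd K (munit i)))
  end.

(* total derivative D_i = d/dx_i + sum u^j_{K+e_i} d/du^j_K *)
Definition Dtot (i : 'I_p) (F : jfun R p q) : jfun R p q :=
  fun z => pd (inl i) F z + \sum_(v <- undup (supp F)) tcoef i v z * pd v F z.

Definition Dmulti (K : mi p) (F : jfun R p q) : jfun R p q :=
  foldr (fun i G => iter (K i) (Dtot i) G) F (enum 'I_p).

Definition is_ranking (rk : 'I_q * mi p -> 'I_q * mi p -> Prop) :=
  (forall a, rk a a) /\
  (forall a b, rk a b -> rk b a -> a = b) /\
  (forall a b c, rk a b -> rk b c -> rk a c) /\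
  (forall a b, rk a b \/ rk b a) /\
  (forall j K L, rk (j, K) (j, madd K L)) /\
  (forall a b L, rk a b <-> rk (a.1, madd a.2 L) (b.1, madd b.2 L)).

Section System.
(* the system u^{idx a}_{J a} = P a, a < n *)
Variables (n : nat) (idx : 'I_n -> 'I_q) (J : 'I_n -> mi p) (P : 'I_n -> jfun R p q).

Definition principal (jk : 'I_q * mi p) :=
  exists (a : 'I_n) (L : mi p), jk = (idx a, madd (J a) L).

Definition parametric_var (v : Var p q) :=
  match v with inl _ => True | inr jk => ~ principal jk end.

Definition inB (F : jfun R p q) :=
  exists S, Cinf S F /\ forall w, w \in S -> parametric_var w.

Definition Delta (a : 'I_n) : jfun R p q := fun z => z (inr (idx a, J a)) - P a z.

Definition inI (F : jfun R p q) :=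
  exists (m : nat) (c : 'I_m -> jfun R p q) (L : 'I_m -> mi p) (a : 'I_m -> 'I_n),
    (forall k, inA (c k)) /\
    F = fun z => \sum_(k < m) c k z * Dmulti (L k) (Delta (a k)) z.

Definition passive_orthonomic (rk : 'I_q * mi p -> 'I_q * mi p -> Prop) :=
  [/\ is_ranking rk,
      (forall a, J a <> mzero p),
      (forall a, inB (P a)),
      (forall a, exists S, Cinf S (P a) /\ forall w, w \in S ->
         match w with
         | inl _ => True
         | inr jk => rk jk (idx a, J a) /\ jk <> (idx a, J a)
         end) &
      (forall a b K L, (idx a, madd (J a) K) = (idx b, madd (J b) L) ->
         inI (fun z => Dmulti K (P a) z - Dmulti L (P b) z))].

Definition is_reduced (Q Rf : jfun R p q) := inB Rf /\ inI (fun z => Q z - Rf z).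

Definition frakD (K : mi p) (F : jfun R p q) : jfun R p q :=
  epsilon (inhabits (fun _ => 0)) (is_reduced (Dmulti K F)).

End System.
End Jet.

From HB Require Import structures.
From mathcomp Require Import all_boot all_order all_algebra.
From mathcomp Require Import boolp classical_sets reals topology normedtype derive.
From mathcomp Require Import functions realfun.
From Stdlib Require Import ClassicalEpsilon.
From mathcomp Require Import ring lra.
Set Implicit Arguments. Unset Strict Implicit. Unset Printing Implicit Defensive.
Import Order.TTheory GRing.Theory Num.Theory.
Import numFieldNormedType.Exports.
Local Open Scope ring_scope.

(* The differential ideal generated by the Delta^alpha is stable under every
   total derivative D_i: this needs D_i D_L = D_(L + e_i), i.e. that total
   derivatives commute, which in turn rests on the symmetry of second partial
   derivatives of smooth functions.  Hence if G is a reduced form of Q, the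
   reduced form of D_i G is a reduced form of D_i Q.  Following
   D_K F = D_1^(K_1) ... D_p^(K_p) F one factor at a time, the right-hand side
   is a reduced form of D_K F, so it is the reduced form by uniqueness. *)

(** * Partial derivatives *)

Section PartialDerivatives.
Variables (R : realType) (p q : nat).
Local Notation V := (Var p q).
Local Notation F := (jfun R p q).
Implicit Types (S : seq V) (G H : F).

Lemma upd_id (z : V -> R) v : upd z v (z v) = z.
Proof. by apply/funext => w; rewrite /upd; case: eqP => [->|]. Qed.

Lemma upd_upd (z : V -> R) v s t : upd (upd z v s) v t = upd z v t.
Proof. by apply/funext => w; rewrite /upd; case: eqP. Qed.

Lemma upd_eq (z : V -> R) v t : upd z v t v = t.
Proof. by rewrite /upd eqxx. Qed.

Lemma upd_neq (z : V -> R) v t w : w != v -> upd z v t w = z w.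
Proof. by rewrite /upd => /negbTE ->. Qed.

Lemma upd_comm (z : V -> R) a b s t : a != b ->
  upd (upd z a s) b t = upd (upd z b t) a s.
Proof.
move=> ab; apply/funext => w; rewrite /upd.
case: (eqVneq w b) => [wb|wb]; case: (eqVneq w a) => [wa|wa] //.
by move: ab; rewrite -wa -wb eqxx.
Qed.

Definition has_pd v H := forall z, derivable (fun t => H (upd z v t)) (z v) 1.

Lemma has_pd_at v H z t : has_pd v H -> derivable (fun t => H (upd z v t)) t 1.
Proof.
move=> d; have := d (upd z v t); rewrite upd_eq.
by under eq_fun do rewrite upd_upd.
Qed.

Lemma pdE v H z : pd v H z = 'D_1 (fun t => H (upd z v t)) (z v).
Proof. by rewrite /pd derive1E. Qed.

Lemma depends_on_sub S S' H : depends_on S H -> {subset S <= S'} -> depends_on S' H.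
Proof. by move=> d sub z z' e; apply: d => w /sub; apply: e. Qed.

Lemma pd_nodep S v H : depends_on S H -> v \notin S -> pd v H = fun _ => 0.
Proof.
move=> dep vS; apply/funext => z; rewrite /pd.
have -> : (fun t => H (upd z v t)) = cst (H z).
  apply/funext => t; apply: dep => w wS; rewrite upd_neq //.
  by apply: contraNneq vS => <-.
by rewrite derive1_cst.
Qed.

Lemma depends_on_pd S v H : depends_on S H -> depends_on S (pd v H).
Proof.
move=> dep; case vS: (v \in S); last by rewrite (pd_nodep dep (negbT vS)).
move=> z z' e; rewrite /pd (e v vS).
have -> // : (fun t => H (upd z v t)) = (fun t => H (upd z' v t)).
apply/funext => t; apply: dep => w wS; rewrite /upd; case: eqP => // _.
exact: e.
Qed.

Lemma depends_onD S S' G H : depends_on S G -> depends_on S' H ->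
  depends_on (S ++ S') (fun z => G z + H z).
Proof.
move=> dG dH z z' e; rewrite (dG z z') ?(dH z z') // => w w1; apply: e;
  by rewrite mem_cat w1 ?orbT.
Qed.

Lemma depends_onM S S' G H : depends_on S G -> depends_on S' H ->
  depends_on (S ++ S') (fun z => G z * H z).
Proof.
move=> dG dH z z' e; rewrite (dG z z') ?(dH z z') // => w w1; apply: e;
  by rewrite mem_cat w1 ?orbT.
Qed.

Lemma depends_onN S G : depends_on S G -> depends_on S (fun z => - G z).
Proof. by move=> dG z z' e; rewrite (dG z z'). Qed.

Lemma depends_on_coord w : depends_on [:: w] (fun z : V -> R => z w).
Proof. by move=> z z' e; apply: e; rewrite inE. Qed.

Lemma depends_on_sum (I : eqType) S (s : seq I) (h : I -> F) :
  (forall k, k \in s -> depends_on S (h k)) ->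
  depends_on S (fun z => \sum_(k <- s) h k z).
Proof. by move=> d z z' e; apply: eq_big_seq => k ks; exact: d. Qed.

Lemma pdD v G H : has_pd v G -> has_pd v H ->
  pd v (fun z => G z + H z) = fun z => pd v G z + pd v H z.
Proof.
move=> dG dH; apply/funext => z; rewrite !pdE.
have -> : (fun t => G (upd z v t) + H (upd z v t)) =
  ((fun t => G (upd z v t)) + (fun t => H (upd z v t)))%R by [].
by rewrite deriveD.
Qed.

Lemma pdM v G H : has_pd v G -> has_pd v H ->
  pd v (fun z => G z * H z) = fun z => pd v G z * H z + G z * pd v H z.
Proof.
move=> dG dH; apply/funext => z; rewrite !pdE.
have -> : (fun t => G (upd z v t) * H (upd z v t)) =
  ((fun t => G (upd z v t)) * (fun t => H (upd z v t)))%R by [].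
rewrite deriveM //.
by rewrite /= upd_id addrC; congr (_ + _); exact: mulrC.
Qed.

Lemma pdN v G : has_pd v G -> pd v (fun z => - G z) = fun z => - pd v G z.
Proof.
move=> dG; apply/funext => z; rewrite !pdE.
have -> : (fun t => - G (upd z v t)) = (- (fun t => G (upd z v t)))%R by [].
by rewrite deriveN.
Qed.

Lemma pd_cst v (c : R) : pd v (fun _ : V -> R => c) = fun _ => 0.
Proof. by apply/funext => z; rewrite /pd derive1_cst. Qed.

Lemma pd_coord v w : pd v (fun z : V -> R => z w) = fun _ => (v == w)%:R.
Proof.
apply/funext => z; rewrite /pd; case: (eqVneq v w) => [->|vw].
  have -> : (fun t => upd z w t w) = id by apply/funext => t; rewrite upd_eq.
  by rewrite derive1E derive_id.
have -> : (fun t => upd z v t w) = cst (z w).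
  by apply/funext => t; rewrite upd_neq // eq_sym.
by rewrite derive1_cst.
Qed.

Lemma has_pdD v G H : has_pd v G -> has_pd v H -> has_pd v (fun z => G z + H z).
Proof.
move=> dG dH z.
have -> : (fun t => G (upd z v t) + H (upd z v t)) =
  ((fun t => G (upd z v t)) + (fun t => H (upd z v t)))%R by [].
by apply: derivableD; [apply: dG | apply: dH].
Qed.

Lemma has_pdM v G H : has_pd v G -> has_pd v H -> has_pd v (fun z => G z * H z).
Proof.
move=> dG dH z.
have -> : (fun t => G (upd z v t) * H (upd z v t)) =
  ((fun t => G (upd z v t)) * (fun t => H (upd z v t)))%R by [].
by apply: derivableM; [apply: dG | apply: dH].
Qed.

Lemma has_pdN v G : has_pd v G -> has_pd v (fun z => - G z).
Proof.
move=> dG z.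
have -> : (fun t => - G (upd z v t)) = (- (fun t => G (upd z v t)))%R by [].
by apply: derivableN; apply: dG.
Qed.

Lemma has_pd_cst v (c : R) : has_pd v (fun _ : V -> R => c).
Proof. by move=> z; apply: derivable_cst. Qed.

Lemma has_pd_coord v w : has_pd v (fun z : V -> R => z w).
Proof.
move=> z; case: (eqVneq v w) => [->|vw].
  have -> : (fun t => upd z w t w) = id by apply/funext => t; rewrite upd_eq.
  exact: derivable_id.
have -> : (fun t => upd z v t w) = cst (z w).
  by apply/funext => t; rewrite upd_neq // eq_sym.
exact: derivable_cst.
Qed.

Lemma has_pd_sum v (I : Type) (s : seq I) (h : I -> F) : (forall k, has_pd v (h k)) ->
  has_pd v (fun z => \sum_(k <- s) h k z).
Proof.
move=> d; elim: s => [|k s IH].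
  have -> : (fun z => \sum_(k <- [::]) h k z) = fun _ => 0.
    by apply/funext => z; rewrite big_nil.
  exact: has_pd_cst.
have -> : (fun z => \sum_(j <- k :: s) h j z) = fun z => h k z + \sum_(j <- s) h j z.
  by apply/funext => z; rewrite big_cons.
exact: has_pdD.
Qed.

Lemma pd_sum v (I : Type) (s : seq I) (h : I -> F) : (forall k, has_pd v (h k)) ->
  pd v (fun z => \sum_(k <- s) h k z) = fun z => \sum_(k <- s) pd v (h k) z.
Proof.
move=> d; elim: s => [|k s IH].
  have -> : (fun z => \sum_(k <- [::]) h k z) = fun _ => 0.
    by apply/funext => z; rewrite big_nil.
  by rewrite pd_cst; apply/funext => z; rewrite big_nil.
have -> : (fun z => \sum_(j <- k :: s) h j z) = fun z => h k z + \sum_(j <- s) h j z.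
  by apply/funext => z; rewrite big_cons.
rewrite pdD ?IH //; last exact: has_pd_sum.
by apply/funext => z; rewrite big_cons.
Qed.

End PartialDerivatives.

(** * Smooth functions of finitely many coordinates *)

Section Smoothness.
Variables (R : realType) (p q : nat).
Local Notation V := (Var p q).
Local Notation F := (jfun R p q).
Implicit Types (S : seq V) (G H : F).

Definition coord_continuous S H := forall (z : V -> R) (e : R), 0 < e ->
  exists2 d : R, 0 < d & forall z' : V -> R,
    (forall w, w \in S -> `|z' w - z w| < d) -> `|H z' - H z| < e.

Lemma coord_continuous_sub S S' H :
  coord_continuous S H -> {subset S <= S'} -> coord_continuous S' H.
Proof.
move=> c sub z e e0; have [d d0 hd] := c z e e0; exists d => // z' h.
by apply: hd => w /sub; apply: h.
Qed.

Lemma coord_continuous_cst S (c : R) : coord_continuous S (fun _ => c).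
Proof. by move=> z e e0; exists 1 => // z' _; rewrite subrr normr0. Qed.

Lemma coord_continuous_coord S w : w \in S -> coord_continuous S (fun z : V -> R => z w).
Proof. by move=> wS z e e0; exists e => // z' h; apply: h. Qed.

Lemma coord_continuousN S H : coord_continuous S H -> coord_continuous S (fun z => - H z).
Proof.
move=> c z e e0; have [d d0 hd] := c z e e0; exists d => // z' h.
by rewrite -opprD normrN; apply: hd.
Qed.

Lemma coord_continuousD S G H : coord_continuous S G -> coord_continuous S H ->
  coord_continuous S (fun z => G z + H z).
Proof.
move=> cG cH z e e0.
have e2 : 0 < e / 2 by rewrite divr_gt0.
have [d1 d10 h1] := cG z _ e2; have [d2 d20 h2] := cH z _ e2.
exists (Num.min d1 d2); first by rewrite lt_min d10 d20.
move=> z' h.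
have a1 : `|G z' - G z| < e / 2.
  by apply: h1 => w wS; have := h w wS; rewrite lt_min => /andP[].
have a2 : `|H z' - H z| < e / 2.
  by apply: h2 => w wS; have := h w wS; rewrite lt_min => /andP[].
have -> : G z' + H z' - (G z + H z) = (G z' - G z) + (H z' - H z) by ring.
by apply: (le_lt_trans (ler_normD _ _)); lra.
Qed.

Lemma coord_continuousM S G H : coord_continuous S G -> coord_continuous S H ->
  coord_continuous S (fun z => G z * H z).
Proof.
move=> cG cH z e e0.
set A := `|G z|; set B := `|H z|.
have A0 : 0 <= A by apply: normr_ge0.
have B0 : 0 <= B by apply: normr_ge0.
have e1 : 0 < Num.min 1 (e / (2 * (B + 1))).
  by rewrite lt_min ltr01 /= divr_gt0 // mulr_gt0 // ltr_wpDl.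
have e2 : 0 < e / (2 * (A + 1)) by rewrite divr_gt0 // mulr_gt0 // ltr_wpDl.
have [d1 d10 h1] := cG z _ e1; have [d2 d20 h2] := cH z _ e2.
exists (Num.min d1 d2); first by rewrite lt_min d10 d20.
move=> z' h.
have : `|G z' - G z| < Num.min 1 (e / (2 * (B + 1))).
  by apply: h1 => w wS; have := h w wS; rewrite lt_min => /andP[].
rewrite lt_min => /andP[x1 x2].
have a2 : `|H z' - H z| < e / (2 * (A + 1)).
  by apply: h2 => w wS; have := h w wS; rewrite lt_min => /andP[].
set x := `|G z' - G z| in x1 x2; set y := `|H z' - H z| in a2.
have y0 : 0 <= y by apply: normr_ge0.
have X : x * (2 * (B + 1)) < e by rewrite -ltr_pdivlMr // mulr_gt0 // ltr_wpDl.
have Y : y * (2 * (A + 1)) < e by rewrite -ltr_pdivlMr // mulr_gt0 // ltr_wpDl.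
have xy : x * y <= y by rewrite ler_piMl // ltW.
have -> : G z' * H z' - G z * H z =
  (G z' - G z) * (H z' - H z) + G z * (H z' - H z) + H z * (G z' - G z) by ring.
apply: (le_lt_trans (ler_normD _ _)); rewrite !normrM -/x -/y -/A -/B.
apply: (le_lt_trans (lerD (ler_normD _ _) (lexx _))); rewrite !normrM -/x -/y -/A -/B.
nra.
Qed.

(* One derivative level of [Cinf]; unlike [Cinf] itself, it is closed under
   products without an induction. *)
Definition diff_cont S H := (forall v, has_pd v H) /\ coord_continuous S H.

Lemma diff_contD S G H : diff_cont S G -> diff_cont S H -> diff_cont S (fun z => G z + H z).
Proof.
by move=> [dG cG] [dH cH]; split; [move=> v; apply: has_pdD | apply: coord_continuousD].
Qed.

Lemma diff_contM S G H : diff_cont S G -> diff_cont S H -> diff_cont S (fun z => G z * H z).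
Proof.
by move=> [dG cG] [dH cH]; split; [move=> v; apply: has_pdM | apply: coord_continuousM].
Qed.

Lemma diff_contN S G : diff_cont S G -> diff_cont S (fun z => - G z).
Proof. by move=> [dG cG]; split; [move=> v; apply: has_pdN | apply: coord_continuousN]. Qed.

Lemma diff_cont_cst S (c : R) : diff_cont S (fun _ : V -> R => c).
Proof. by split; [move=> v; apply: has_pd_cst | apply: coord_continuous_cst]. Qed.

Lemma CinfP S H : Cinf S H <-> depends_on S H /\ forall vs, diff_cont S (pds vs H).
Proof. by split=> [[d h]|[d h]]; split=> // vs; have [h1 h2] := h vs. Qed.

Lemma pds_rcons vs v H : pds (rcons vs v) H = pds vs (pd v H).
Proof. by rewrite /pds foldr_rcons. Qed.

Lemma pdsD vs G H :
  (forall ws u, (size ws < size vs)%N -> has_pd u (pds ws G) /\ has_pd u (pds ws H)) ->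
  pds vs (fun z => G z + H z) = fun z => pds vs G z + pds vs H z.
Proof.
elim: vs => //= v vs IH h.
rewrite IH; last by move=> ws u s; apply: h; rewrite ltnS ltnW.
by have [] := h vs v (ltnSn _) => d1 d2; rewrite pdD.
Qed.

Lemma pdsN vs G : (forall ws u, (size ws < size vs)%N -> has_pd u (pds ws G)) ->
  pds vs (fun z => - G z) = fun z => - pds vs G z.
Proof.
elim: vs => //= v vs IH h.
rewrite IH; last by move=> ws u s; apply: h; rewrite ltnS ltnW.
by rewrite pdN //; apply: h.
Qed.

Lemma pds_cst vs (c : R) :
  pds vs (fun _ : V -> R => c) = fun _ => if vs is [::] then c else 0.
Proof. by elim: vs => //= v vs ->; case: vs => *; rewrite pd_cst. Qed.

Lemma Cinf_sub S S' H : Cinf S H -> {subset S <= S'} -> Cinf S' H.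
Proof.
move=> /CinfP [d h] sub; apply/CinfP; split; first exact: depends_on_sub sub.
by move=> vs; have [h1 h2] := h vs; split=> //; apply: coord_continuous_sub sub.
Qed.

Lemma Cinf_cst S (c : R) : Cinf S (fun _ : V -> R => c).
Proof.
by apply/CinfP; split=> // vs; rewrite pds_cst; case: vs => *; apply: diff_cont_cst.
Qed.

Lemma Cinf_coord w : Cinf [:: w] (fun z : V -> R => z w).
Proof.
apply/CinfP; split; first exact: depends_on_coord.
case/lastP=> [|vs u].
  by split; [move=> v; apply: has_pd_coord | apply: coord_continuous_coord; rewrite inE].
by rewrite pds_rcons pd_coord pds_cst; case: vs => *; apply: diff_cont_cst.
Qed.

Lemma Cinf_pd S v H : Cinf S H -> Cinf S (pd v H).
Proof.
move=> /CinfP [d h]; apply/CinfP; split; first exact: depends_on_pd.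
by move=> vs; rewrite -pds_rcons.
Qed.

Lemma Cinf_has_pd S v H : Cinf S H -> has_pd v H.
Proof. by move=> /CinfP [_ h]; have [] := h [::]. Qed.

Lemma CinfD S G H : Cinf S G -> Cinf S H -> Cinf S (fun z => G z + H z).
Proof.
move=> /CinfP [dG hG] /CinfP [dH hH]; apply/CinfP; split.
  by apply: depends_on_sub (depends_onD dG dH) _ => w; rewrite mem_cat orbb.
move=> vs; rewrite pdsD; first by apply: diff_contD.
by move=> ws u _; split; [case: (hG ws) | case: (hH ws)].
Qed.

Lemma CinfN S G : Cinf S G -> Cinf S (fun z => - G z).
Proof.
move=> /CinfP [dG hG]; apply/CinfP; split; first exact: depends_onN.
by move=> vs; rewrite pdsN; [apply: diff_contN | move=> ws u _; case: (hG ws)].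
Qed.

(* Leibniz's rule only lowers the number of derivatives by one, so the
   induction is on the length of [vs], for all pairs of factors at once. *)
Lemma diff_cont_pdsM S G H vs : Cinf S G -> Cinf S H ->
  diff_cont S (pds vs (fun z => G z * H z)).
Proof.
elim: {vs}(size vs) {-2}vs (leqnn (size vs)) G H => [|n IH] vs sz G H CG CH.
  case: vs sz => // _; case/CinfP: CG => _ hG; case/CinfP: CH => _ hH.
  by apply: diff_contM; [apply: (hG [::]) | apply: (hH [::])].
case/lastP: vs sz => [|vs v]; first by move=> _; apply: (IH [::]).
rewrite size_rcons ltnS => sz.
have IHl := IH _ sz _ _ (Cinf_pd v CG) CH.
have IHr := IH _ sz _ _ CG (Cinf_pd v CH).
rewrite pds_rcons pdM; [|exact: Cinf_has_pd CG|exact: Cinf_has_pd CH].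
rewrite pdsD; first exact: diff_contD.
move=> ws u s; have sz' := leq_trans (ltnW s) sz; split.
  by case: (IH _ sz' _ _ (Cinf_pd v CG) CH).
by case: (IH _ sz' _ _ CG (Cinf_pd v CH)).
Qed.

Lemma CinfM S G H : Cinf S G -> Cinf S H -> Cinf S (fun z => G z * H z).
Proof.
move=> CG CH; apply/CinfP; split; last by move=> vs; apply: diff_cont_pdsM.
case/CinfP: CG => dG _; case/CinfP: CH => dH _.
by apply: depends_on_sub (depends_onM dG dH) _ => w; rewrite mem_cat orbb.
Qed.

Lemma inA_Cinf2 G H : inA G -> inA H -> exists S, Cinf S G /\ Cinf S H.
Proof.
move=> [S1 C1] [S2 C2]; exists (S1 ++ S2); split.
  by apply: Cinf_sub C1 _ => w w1; rewrite mem_cat w1.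
by apply: Cinf_sub C2 _ => w w1; rewrite mem_cat w1 orbT.
Qed.

Lemma inA_depends_on2 G H : inA G -> inA H ->
  exists S, depends_on S G /\ depends_on S H.
Proof.
by move=> a b; have [S [/CinfP [d1 _] /CinfP [d2 _]]] := inA_Cinf2 a b; exists S.
Qed.

Lemma inAD G H : inA G -> inA H -> inA (fun z => G z + H z).
Proof. by move=> a b; have [S [C1 C2]] := inA_Cinf2 a b; exists S; apply: CinfD. Qed.

Lemma inAM G H : inA G -> inA H -> inA (fun z => G z * H z).
Proof. by move=> a b; have [S [C1 C2]] := inA_Cinf2 a b; exists S; apply: CinfM. Qed.

Lemma inAN G : inA G -> inA (fun z => - G z).
Proof. by move=> [S C]; exists S; apply: CinfN. Qed.

Lemma inA_cst (c : R) : inA (fun _ : V -> R => c).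
Proof. by exists [::]; apply: Cinf_cst. Qed.

Lemma inA_coord w : inA (fun z : V -> R => z w).
Proof. by exists [:: w]; apply: Cinf_coord. Qed.

Lemma inA_pd v H : inA H -> inA (pd v H).
Proof. by move=> [S C]; exists S; apply: Cinf_pd. Qed.

Lemma inA_has_pd v H : inA H -> has_pd v H.
Proof. by move=> [S C]; apply: Cinf_has_pd C. Qed.

Lemma inA_sum (I : Type) (s : seq I) (h : I -> F) : (forall i, inA (h i)) ->
  inA (fun z => \sum_(i <- s) h i z).
Proof.
move=> hA; elim: s => [|i s IH].
  by under eq_fun do rewrite big_nil; apply: inA_cst.
by under eq_fun do rewrite big_cons; apply: inAD.
Qed.

Lemma inA_supp H : inA H -> depends_on (supp H) H.
Proof.
move=> [S /CinfP [d _]].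
exact: (epsilon_spec (inhabits [::]) (fun S => depends_on S H) (ex_intro _ S d)).
Qed.

End Smoothness.

(** * Symmetry of second partial derivatives *)

Section Schwarz.
Variables (R : realType) (p q : nat).
Local Notation V := (Var p q).
Local Notation F := (jfun R p q).
Implicit Types (S : seq V) (G H : F).

Lemma MVT_pd v H (z : V -> R) (a b : R) : has_pd v H -> a < b ->
  exists2 c, a < c < b &
    H (upd z v b) - H (upd z v a) = pd v H (upd z v c) * (b - a).
Proof.
move=> d ab.
have derH (x : R) : is_derive x 1 (fun s => H (upd z v s)) (pd v H (upd z v x)).
  rewrite pdE upd_eq.
  have -> : (fun s => H (upd (upd z v x) v s)) = fun s => H (upd z v s).
    by apply/funext => s; rewrite upd_upd.
  exact/derivableP/has_pd_at.
have [c cab e] := MVT ab (fun x _ => derH x)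
  (derivable_within_continuous (fun x _ => has_pd_at (z:=z) (t:=x) d)).
by exists c => //; move: cab; rewrite in_itv.
Qed.

Lemma pd_upd (a b : V) (c : R) H : a != b -> has_pd a H ->
  pd a (fun w => H (upd w b c)) = fun w => pd a H (upd w b c).
Proof.
move=> ab d; apply/funext => w; rewrite !pdE upd_neq //.
by have -> : (fun t => H (upd (upd w a t) b c)) = (fun t => H (upd (upd w b c) a t))
  by apply/funext => t; rewrite upd_comm.
Qed.

Lemma has_pd_upd (a b : V) (c : R) H : a != b -> has_pd a H ->
  has_pd a (fun w => H (upd w b c)).
Proof.
move=> ab d w; have := d (upd w b c); rewrite upd_neq //.
by have -> : (fun t => H (upd (upd w a t) b c)) = (fun t => H (upd (upd w b c) a t))
  by apply/funext => t; rewrite upd_comm.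
Qed.

(* Two applications of the mean value theorem, first in [a], then in [b]. *)
Lemma second_difference a b H (z : V -> R) (d : R) : a != b -> 0 < d ->
  (forall v, has_pd v H) -> (forall v, has_pd v (pd a H)) ->
  exists s t, [/\ z a < s < z a + d, z b < t < z b + d &
    H (upd (upd z a (z a + d)) b (z b + d)) - H (upd z a (z a + d))
    - H (upd z b (z b + d)) + H z
    = pd b (pd a H) (upd (upd z a s) b t) * (d * d)].
Proof.
move=> ab d0 dH dHa.
have ba : b != a by rewrite eq_sym.
pose G w := H (upd w b (z b + d)) - H w.
have dG : has_pd a G by apply: has_pdD; [apply: has_pd_upd | apply: has_pdN].
have pdG : pd a G = fun w => pd a H (upd w b (z b + d)) - pd a H w.
  by rewrite /G (pdD (has_pd_upd ab (dH a)) (has_pdN (dH a))) (pd_upd _ ab (dH a))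
    (pdN (dH a)).
have [s sab Es] := MVT_pd z dG (ltr_pwDr d0 (lexx (z a))).
have [t tab Et] := MVT_pd (upd z a s) (dHa b) (ltr_pwDr d0 (lexx (z b))).
have z1b : upd (upd z a s) b (z b) = upd z a s.
  by rewrite -[X in upd _ b X](upd_neq z s ba) upd_id.
rewrite pdG upd_id in Es; rewrite z1b in Et.
exists s, t; split => //.
have -> : H (upd (upd z a (z a + d)) b (z b + d)) - H (upd z a (z a + d))
    - H (upd z b (z b + d)) + H z = G (upd z a (z a + d)) - G z by rewrite /G; ring.
by rewrite Es Et; ring.
Qed.

Lemma upd2_near (z : V -> R) a b (x y d : R) u :
  `|x - z a| < d -> `|y - z b| < d -> `|upd (upd z a x) b y u - z u| < d.
Proof.
move=> hx hy; rewrite /upd; case: (eqVneq u b) => [->//|ub].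
by case: (eqVneq u a) => [->//|ua]; apply: le_lt_trans hx; rewrite subrr normr0.
Qed.

Lemma dist_ltr_itv (x c d : R) : x < c < x + d -> `|c - x| < d.
Proof. by move=> /andP[h1 h2]; rewrite ger0_norm; lra. Qed.

Lemma pd_comm S a b H : Cinf S H -> pd a (pd b H) = pd b (pd a H).
Proof.
move=> /CinfP[_ hC]; case: (eqVneq a b) => [->//|ab].
have dH v : has_pd v H by case: (hC [::]).
have dHa v : has_pd v (pd a H) by case: (hC [:: a]).
have dHb v : has_pd v (pd b H) by case: (hC [:: b]).
have ba : b != a by rewrite eq_sym.
apply/funext => z; apply/eqP; rewrite -subr_eq0 -normr_le0.
apply/ler_addgt0Pr => e e0; rewrite add0r.
have e2 : 0 < e / 2 by rewrite divr_gt0.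
have [d1 d10 h1] := (hC [:: b; a]).2 z _ e2.
have [d2 d20 h2] := (hC [:: a; b]).2 z _ e2.
have [d [d0 dd1 dd2]] : exists d, [/\ 0 < d, d <= d1 & d <= d2].
  by exists (Num.min d1 d2); split; rewrite ?lt_min ?ge_min ?lexx ?d10 ?d20 ?orbT.
have [s [t [sd td Eab]]] := second_difference z ab d0 dH dHa.
have [t' [s' [td' sd' Eba]]] := second_difference z ba d0 dH dHb.
have c1 : `|pd b (pd a H) (upd (upd z a s) b t) - pd b (pd a H) z| < e / 2.
  apply: h1 => u _; apply: lt_le_trans dd1.
  by apply: upd2_near; apply: dist_ltr_itv.
have c2 : `|pd a (pd b H) (upd (upd z b t') a s') - pd a (pd b H) z| < e / 2.
  apply: h2 => u _; apply: lt_le_trans dd2.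
  by apply: upd2_near; apply: dist_ltr_itv.
have sq_sym : H (upd (upd z a (z a + d)) b (z b + d)) - H (upd z a (z a + d))
    - H (upd z b (z b + d)) + H z = H (upd (upd z b (z b + d)) a (z a + d))
    - H (upd z b (z b + d)) - H (upd z a (z a + d)) + H z.
  by rewrite upd_comm //; congr (_ + _); apply: addrAC.
(* Rewriting with [Eab] would try to unify [pd] terms up to conversion. *)
have EQ : pd b (pd a H) (upd (upd z a s) b t) = pd a (pd b H) (upd (upd z b t') a s').
  apply: (mulIf (x := d * d)); first by rewrite mulf_neq0 // gt_eqF.
  exact: etrans (esym Eab) (etrans sq_sym Eba).
rewrite EQ in c1.
have via (x y w : R) : y - x = (w - x) - (w - y) by ring.
rewrite (via _ _ (pd a (pd b H) (upd (upd z b t') a s'))).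
apply: le_trans (ler_normB _ _) _.
by rewrite [e]splitr; apply/ltW; exact: ltrD c1 c2.
Qed.

End Schwarz.

(** * Total derivatives *)

Section TotalDerivatives.
Variables (R : realType) (p q : nat).
Local Notation V := (Var p q).
Local Notation F := (jfun R p q).
Implicit Types (S W : seq V) (G H : F).

(* [Dtot] sums over the arbitrary list [supp H]; any duplicate-free list
   containing the coordinates H depends on gives the same function. *)
Definition Dtot_on i W H : F :=
  fun z => pd (inl i) H z + \sum_(v <- W) tcoef i v z * pd v H z.

Lemma big_supp S W1 W2 (f : V -> R) : (forall v, v \notin S -> f v = 0) ->
  {subset S <= W1} -> {subset S <= W2} -> uniq W1 -> uniq W2 ->
  \sum_(v <- W1) f v = \sum_(v <- W2) f v.
Proof.
move=> f0 s1 s2 u1 u2.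
rewrite -(@big_rmcond _ _ _ _ W1 (fun v => v \in S) f); last by move=> v /f0.
rewrite -(@big_rmcond _ _ _ _ W2 (fun v => v \in S) f); last by move=> v /f0.
rewrite -(big_filter W1) -(big_filter W2); apply: perm_big.
apply: uniq_perm; rewrite ?filter_uniq // => v; rewrite !mem_filter /=.
by case vS: (v \in S) => //=; rewrite s1 ?s2.
Qed.

Lemma DtotE i S W H : inA H -> depends_on S H -> uniq W -> {subset S <= W} ->
  Dtot i H = Dtot_on i W H.
Proof.
move=> hA dep uW sW; apply/funext => z; rewrite /Dtot /Dtot_on; congr (_ + _).
apply: (big_supp (S := [seq v <- S | v \in supp H])).
- move=> v; rewrite mem_filter negb_and => /orP[] vS.
    by rewrite (pd_nodep (inA_supp hA) vS) mulr0.
  by rewrite (pd_nodep dep vS) mulr0.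
- by move=> v; rewrite mem_filter mem_undup => /andP[].
- by move=> v; rewrite mem_filter => /andP[_ /sW].
- exact: undup_uniq.
- exact: uW.
Qed.

Lemma inA_tcoef i (v : V) : inA (tcoef (R := R) i v).
Proof. by case: v => [k|[j K]]; [apply: inA_cst | apply: inA_coord]. Qed.

Lemma inA_Dtot_on i W H : inA H -> inA (Dtot_on i W H).
Proof.
move=> hA; apply: inAD; first exact: inA_pd.
by apply: inA_sum => v; apply: inAM; [exact: inA_tcoef | exact: inA_pd].
Qed.

Lemma inA_Dtot i H : inA H -> inA (Dtot i H).
Proof. exact: inA_Dtot_on. Qed.

Lemma Dtot_onD i W G H : inA G -> inA H ->
  Dtot_on i W (fun z => G z + H z) = fun z => Dtot_on i W G z + Dtot_on i W H z.
Proof.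
move=> aG aH; have dG v : has_pd v G by apply: inA_has_pd.
have dH v : has_pd v H by apply: inA_has_pd.
apply/funext => z; rewrite /Dtot_on; under eq_bigr => v _ do rewrite pdD // mulrDr.
by rewrite pdD // big_split /=; ring.
Qed.

Lemma Dtot_onM i W G H : inA G -> inA H ->
  Dtot_on i W (fun z => G z * H z) = fun z => Dtot_on i W G z * H z + G z * Dtot_on i W H z.
Proof.
move=> aG aH; have dG v : has_pd v G by apply: inA_has_pd.
have dH v : has_pd v H by apply: inA_has_pd.
apply/funext => z; rewrite /Dtot_on.
under eq_bigr => v _ do rewrite pdM // mulrDr mulrA mulrCA.
by rewrite pdM // big_split /= -big_distrl -big_distrr /=; ring.
Qed.

Lemma Dtot_onN i W G : inA G -> Dtot_on i W (fun z => - G z) = fun z => - Dtot_on i W G z.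
Proof.
move=> aG; have dG v : has_pd v G by apply: inA_has_pd.
apply/funext => z; rewrite /Dtot_on; under eq_bigr => v _ do rewrite pdN // mulrN.
by rewrite pdN // sumrN opprD.
Qed.

Lemma DtotD i G H : inA G -> inA H ->
  Dtot i (fun z => G z + H z) = fun z => Dtot i G z + Dtot i H z.
Proof.
move=> aG aH; have [S [dG dH]] := inA_depends_on2 aG aH.
have sub : {subset S <= undup S} by move=> v; rewrite mem_undup.
have sub2 : {subset S ++ S <= undup S} by move=> v; rewrite mem_cat orbb mem_undup.
rewrite (DtotE _ aG dG (undup_uniq S) sub) (DtotE _ aH dH (undup_uniq S) sub).
by rewrite (DtotE i (inAD aG aH) (depends_onD dG dH) (undup_uniq S) sub2) Dtot_onD.
Qed.

Lemma DtotM i G H : inA G -> inA H ->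
  Dtot i (fun z => G z * H z) = fun z => Dtot i G z * H z + G z * Dtot i H z.
Proof.
move=> aG aH; have [S [dG dH]] := inA_depends_on2 aG aH.
have sub : {subset S <= undup S} by move=> v; rewrite mem_undup.
have sub2 : {subset S ++ S <= undup S} by move=> v; rewrite mem_cat orbb mem_undup.
rewrite (DtotE _ aG dG (undup_uniq S) sub) (DtotE _ aH dH (undup_uniq S) sub).
by rewrite (DtotE i (inAM aG aH) (depends_onM dG dH) (undup_uniq S) sub2) Dtot_onM.
Qed.

Lemma DtotN i G : inA G -> Dtot i (fun z => - G z) = fun z => - Dtot i G z.
Proof.
move=> aG; have [S [dG _]] := inA_depends_on2 aG aG.
have sub : {subset S <= undup S} by move=> v; rewrite mem_undup.
rewrite (DtotE _ aG dG (undup_uniq S) sub).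
by rewrite (DtotE _ (inAN aG) (depends_onN dG) (undup_uniq S) sub) Dtot_onN.
Qed.

Lemma Dtot_cst i (c : R) : Dtot i (fun _ : V -> R => c) = fun _ => 0.
Proof.
rewrite (DtotE (S := [::]) (W := [::]) i (inA_cst _ _ c)) //.
by apply/funext => z; rewrite /Dtot_on big_nil pd_cst addr0.
Qed.

Lemma Dtot_sum i m (h : 'I_m -> F) : (forall k, inA (h k)) ->
  Dtot i (fun z => \sum_(k < m) h k z) = fun z => \sum_(k < m) Dtot i (h k) z.
Proof.
elim: m h => [|m IH] h hA.
  have -> : (fun z => \sum_(k < 0) h k z) = fun _ => 0.
    by apply/funext => z; rewrite big_ord0.
  by rewrite Dtot_cst; apply/funext => z; rewrite big_ord0.
have split_last (g : 'I_m.+1 -> F) : (fun z => \sum_(k < m.+1) g k z) =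
    fun z => \sum_(k < m) g (widen_ord (leqnSn m) k) z + g ord_max z.
  by apply/funext => z; rewrite big_ord_recr.
rewrite !split_last DtotD //; last by apply: inA_sum.
by rewrite (IH (fun k => h (widen_ord (leqnSn m) k))).
Qed.

End TotalDerivatives.

(** * Commutation of total derivatives *)

Section Commutation.
Variables (R : realType) (p q : nat).
Local Notation V := (Var p q).
Local Notation F := (jfun R p q).
Implicit Types (S W : seq V) (G H : F).

(* [sh i] sends u^j_K to u^j_(K + e_i): for a jet variable v, [tcoef i v] is
   the coordinate [sh i v]. *)
Definition sh (i : 'I_p) (v : V) : V :=
  match v with inl k => inl k | inr (j, K) => inr (j, madd K (munit i)) end.

Definition is_jet (v : V) := if v is inr _ then true else false.

Lemma tcoef_sh i j v : tcoef (R := R) i (sh j v) = tcoef j (sh i v).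
Proof.
case: v => [k|[jj K]]; apply/funext => z //=.
by congr (z (inr (jj, _))); apply/ffunP => x; rewrite !ffunE addnAC.
Qed.

Lemma pd_tcoef u j w : pd u (tcoef (R := R) j w) = fun _ => (is_jet w && (u == sh j w))%:R.
Proof. by case: w => [k|[jj K]]; [apply: pd_cst | apply: pd_coord]. Qed.

Lemma depends_on_tcoef j w : depends_on [:: sh j w] (tcoef (R := R) j w).
Proof. by case: w => [k|[jj K]] //; apply: depends_on_coord. Qed.

Lemma depends_on_Dtot_on j S W H : depends_on S H ->
  depends_on (S ++ map (sh j) S) (Dtot_on j W H).
Proof.
move=> dep; have sub : {subset S <= S ++ map (sh j) S}.
  by move=> v vS; rewrite mem_cat vS.
have dterm w : w \in W ->
    depends_on (S ++ map (sh j) S) (fun z => tcoef j w z * pd w H z).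
  move=> _; case wS: (w \in S); last first.
    by move=> z z' _; rewrite (pd_nodep dep (negbT wS)) !mulr0.
  apply: (depends_on_sub (S := sh j w :: S)).
    exact: depends_onM (@depends_on_tcoef j w) (depends_on_pd w dep).
  move=> v; rewrite inE => /orP[/eqP ->|/sub //].
  by rewrite mem_cat map_f ?orbT.
apply: depends_on_sub (depends_onD (depends_on_pd (inl j) dep) (depends_on_sum dterm)) _.
by move=> v; rewrite mem_cat => /orP[/sub|].
Qed.

Lemma pd_Dtot_on u j W H : inA H -> pd u (Dtot_on j W H) = fun z =>
  pd u (pd (inl j) H) z
  + \sum_(w <- W) (pd u (tcoef j w) z * pd w H z + tcoef j w z * pd u (pd w H) z).
Proof.
move=> hA.
have hterm w : has_pd u (fun z => tcoef j w z * pd w H z).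
  by apply: has_pdM; apply: inA_has_pd; [apply: inA_tcoef | apply: inA_pd].
rewrite /Dtot_on pdD; last exact: has_pd_sum; last exact/inA_has_pd/inA_pd.
rewrite pd_sum //; apply/funext => z; congr (_ + _); apply: eq_bigr => w _.
by rewrite pdM //; apply: inA_has_pd; [apply: inA_tcoef | apply: inA_pd].
Qed.

Lemma big_delta (W : seq V) (x : V) (f : V -> R) : uniq W -> x \in W ->
  \sum_(u <- W) f u * (u == x)%:R = f x.
Proof.
move=> uW xW; rewrite (bigD1_seq x) //= eqxx mulr1 big1 ?addr0 //.
by move=> u /negbTE ->; rewrite mulr0.
Qed.

(* The expansion of D_i D_j H; it is symmetric in i and j by [pd_comm]. *)
Definition Dtot2 i j W H : F := fun z =>
  pd (inl i) (pd (inl j) H) z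
  + \sum_(w <- W) tcoef j w z * pd (inl i) (pd w H) z
  + \sum_(w <- W) tcoef i w z * pd w (pd (inl j) H) z
  + \sum_(w <- W) tcoef i (sh j w) z * pd w H z
  + \sum_(u <- W) \sum_(w <- W) tcoef i u z * tcoef j w z * pd u (pd w H) z.

Lemma Dtot2C i j S W H : Cinf S H -> Dtot2 i j W H = Dtot2 j i W H.
Proof.
move=> C; apply/funext => z; rewrite /Dtot2.
have E2 : \sum_(w <- W) tcoef j w z * pd (inl i) (pd w H) z =
          \sum_(w <- W) tcoef j w z * pd w (pd (inl i) H) z.
  by apply: eq_bigr => w _; rewrite (pd_comm (inl i) w C).
have E3 : \sum_(w <- W) tcoef i w z * pd w (pd (inl j) H) z =
          \sum_(w <- W) tcoef i w z * pd (inl j) (pd w H) z.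
  by apply: eq_bigr => w _; rewrite (pd_comm w (inl j) C).
have E4 : \sum_(w <- W) tcoef i (sh j w) z * pd w H z =
          \sum_(w <- W) tcoef j (sh i w) z * pd w H z.
  by apply: eq_bigr => w _; rewrite tcoef_sh.
have E5 : \sum_(u <- W) \sum_(w <- W) tcoef i u z * tcoef j w z * pd u (pd w H) z =
          \sum_(u <- W) \sum_(w <- W) tcoef j u z * tcoef i w z * pd u (pd w H) z.
  rewrite exchange_big; apply: eq_bigr => u _; apply: eq_bigr => w _.
  by rewrite (pd_comm w u C) [tcoef i w z * _]mulrC.
have E1 := congr1 (fun f => f z) (pd_comm (inl i) (inl j) C).
have sum5 (x1 x2 x3 x4 x5 y1 y2 y3 y4 y5 : R) : x1 = y1 -> x2 = y3 -> x3 = y2 ->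
    x4 = y4 -> x5 = y5 -> x1 + x2 + x3 + x4 + x5 = y1 + y2 + y3 + y4 + y5.
  by move=> -> -> -> -> ->; rewrite -[y1 + y3 + y2]addrA [y3 + y2]addrC addrA.
exact: sum5 E1 E2 E3 E4 E5.
Qed.

Lemma Dtot_on2 i j S W H : Cinf S H -> uniq W -> {subset map (sh j) S <= W} ->
  Dtot_on i W (Dtot_on j W H) = Dtot2 i j W H.
Proof.
move=> C uW sjW; have hA : inA H by exists S.
case/CinfP: (C) => dep _.
apply/funext => z; rewrite {1}/Dtot_on [pd (inl i) _]pd_Dtot_on //.
have F1 : \sum_(w <- W) (pd (inl i) (tcoef j w) z * pd w H z
                         + tcoef j w z * pd (inl i) (pd w H) z)
        = \sum_(w <- W) tcoef j w z * pd (inl i) (pd w H) z.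
  by apply: eq_bigr => w _; rewrite pd_tcoef; case: w => [k|[jj K]]; rewrite mul0r add0r.
have E2 w : \sum_(u <- W) tcoef i u z * pd u (tcoef j w) z * pd w H z =
            tcoef i (sh j w) z * pd w H z.
  case wS: (w \in S); last first.
    by rewrite (pd_nodep dep (negbT wS)) big1 ?mulr0 // => u _; rewrite mulr0.
  rewrite (eq_bigr (fun u => tcoef i u z * (is_jet w)%:R * pd w H z * (u == sh j w)%:R));
    last by move=> u _; rewrite pd_tcoef -mulnb natrM; ring.
  rewrite big_delta ?sjW ?map_f //.
  by case: w {wS} => [k|[jj K]] /=; rewrite ?mulr1 // mulr0 mul0r.
have F2 : \sum_(u <- W) tcoef i u z * pd u (Dtot_on j W H) z =
    \sum_(w <- W) tcoef i w z * pd w (pd (inl j) H) z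
  + \sum_(w <- W) tcoef i (sh j w) z * pd w H z
  + \sum_(u <- W) \sum_(w <- W) tcoef i u z * tcoef j w z * pd u (pd w H) z.
  rewrite (eq_bigr (fun u => tcoef i u z * pd u (pd (inl j) H) z
      + \sum_(w <- W) tcoef i u z * pd u (tcoef j w) z * pd w H z
      + \sum_(w <- W) tcoef i u z * tcoef j w z * pd u (pd w H) z)); last first.
    move=> u _; rewrite pd_Dtot_on // mulrDr big_distrr /=.
    by under eq_bigr => w _ do rewrite mulrDr !mulrA; rewrite big_split /= addrA.
  rewrite !big_split /= [X in _ + X + _]exchange_big /=.
  by under [X in _ + X + _]eq_bigr => w _ do rewrite E2.
have assoc (a b c x y w v : R) : b = x -> c = y + w + v -> a + b + c = a + x + y + w + v.
  by move=> -> ->; rewrite !addrA.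
exact: assoc F1 F2.
Qed.


Lemma DtotC i j H : inA H -> Dtot i (Dtot j H) = Dtot j (Dtot i H).
Proof.
move=> [S C]; have hA : inA H by exists S.
case/CinfP: (C) => dep _.
pose W := undup (S ++ map (sh i) S ++ map (sh j) S).
have uW : uniq W := undup_uniq _.
have inW v : v \in W = [|| v \in S, v \in map (sh i) S | v \in map (sh j) S].
  by rewrite mem_undup !mem_cat.
have SW : {subset S <= W} by move=> v vS; rewrite inW vS.
have siW : {subset map (sh i) S <= W} by move=> v vS; rewrite inW vS orbT.
have sjW : {subset map (sh j) S <= W} by move=> v vS; rewrite inW vS !orbT.
rewrite (DtotE j hA dep uW SW) (DtotE i hA dep uW SW).
rewrite (DtotE i (inA_Dtot_on j W hA) (depends_on_Dtot_on (j := j) W dep) uW); last first.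
  by move=> v; rewrite mem_cat => /orP[/SW|/sjW].
rewrite (DtotE j (inA_Dtot_on i W hA) (depends_on_Dtot_on (j := i) W dep) uW); last first.
  by move=> v; rewrite mem_cat => /orP[/SW|/siW].
by rewrite (Dtot_on2 i C uW sjW) (Dtot_on2 j C uW siW) (Dtot2C _ _ _ C).
Qed.

End Commutation.

(** * Multiple total derivatives and the differential ideal *)

Section MultiDerivatives.
Variables (R : realType) (p q : nat).
Local Notation F := (jfun R p q).
Implicit Types (G H Y : F).

Definition Dfold (M : mi p) (s : seq 'I_p) Y : F :=
  foldr (fun i G => iter (M i) (Dtot i) G) Y s.

Lemma inA_iter_Dtot i m Y : inA Y -> inA (iter m (Dtot i) Y).
Proof. by move=> hY; elim: m => //= m IH; apply: inA_Dtot. Qed.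

Lemma inA_Dfold M s Y : inA Y -> inA (Dfold M s Y).
Proof. by move=> hY; elim: s => //= j s IH; apply: inA_iter_Dtot. Qed.

Lemma inA_Dmulti K Y : inA Y -> inA (Dmulti K Y).
Proof. exact: inA_Dfold. Qed.

Lemma Dtot_iterC i j m G : inA G -> Dtot i (iter m (Dtot j) G) = iter m (Dtot j) (Dtot i G).
Proof.
move=> hG; elim: m => //= m IH.
by rewrite DtotC ?IH //; apply: inA_iter_Dtot.
Qed.

Lemma eq_Dfold (M1 M2 : mi p) s Y : {in s, M1 =1 M2} -> Dfold M1 s Y = Dfold M2 s Y.
Proof.
elim: s => //= j s IH h; rewrite h ?mem_head // IH // => k ks.
by apply: h; rewrite inE ks orbT.
Qed.

Lemma Dfold_add_unit i s M Y : uniq s -> i \in s -> inA Y ->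
  Dfold (madd M (munit i)) s Y = Dtot i (Dfold M s Y).
Proof.
elim: s => // j s IH /= /andP[js us]; rewrite inE => /orP[/eqP ->|iS] hY.
  rewrite (@eq_Dfold _ M); last first.
    move=> k ks; rewrite !ffunE; case: eqP => [e|_]; last by rewrite addn0.
    by move: js; rewrite -e ks.
  by rewrite !ffunE eqxx addn1.
have ji : j != i by apply: contraNneq js => ->.
rewrite IH // !ffunE (negbTE ji) addn0 Dtot_iterC //.
exact: inA_Dfold.
Qed.

Lemma Dtot_Dmulti i K Y : inA Y -> Dtot i (Dmulti K Y) = Dmulti (madd K (munit i)) Y.
Proof. by move=> hY; rewrite /Dmulti -!/(Dfold _ _ _) Dfold_add_unit ?enum_uniq ?mem_enum. Qed.

Lemma Dmulti0 Y : Dmulti (mzero p) Y = Y.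
Proof. by rewrite /Dmulti; elim: (enum 'I_p) => //= j s ->; rewrite ffunE. Qed.

Lemma Dmulti_unit i Y : inA Y -> Dmulti (munit i) Y = Dtot i Y.
Proof.
move=> hY; have -> : munit i = madd (mzero p) (munit i).
  by apply/ffunP => k; rewrite !ffunE.
by rewrite -Dtot_Dmulti // Dmulti0.
Qed.

Section Ideal.
Variables (n : nat) (idx : 'I_n -> 'I_q) (J : 'I_n -> mi p) (P : 'I_n -> F).
Hypothesis P_A : forall a, inA (P a).
Local Notation I := (inI idx J P).

Lemma inA_Delta a : inA (Delta idx J P a).
Proof. by apply: inAD; [apply: inA_coord | apply/inAN/P_A]. Qed.

Lemma inI0 : I (fun _ => 0).
Proof.
exists 0%N, (fun _ _ => 0), (fun _ => mzero p), (fun k : 'I_0 => False_rect _ (Bool.diff_false_true (ltn_ord k))).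
by split=> [k|]; [apply: inA_cst | apply/funext => z; rewrite big_ord0].
Qed.

Lemma inI_gen c L a : inA c -> I (fun z => c z * Dmulti L (Delta idx J P a) z).
Proof.
move=> hc; exists 1%N, (fun _ => c), (fun _ => L), (fun _ => a); split=> //.
by apply/funext => z; rewrite big_ord1.
Qed.

Lemma inID G H : I G -> I H -> I (fun z => G z + H z).
Proof.
move=> [m1 [c1 [L1 [a1 [h1 ->]]]]] [m2 [c2 [L2 [a2 [h2 ->]]]]].
pose pick T (f1 : 'I_m1 -> T) (f2 : 'I_m2 -> T) (k : 'I_(m1 + m2)) :=
  match fintype.split k with
  | inl k1 => f1 k1 | inr k2 => f2 k2 end.
exists (m1 + m2)%N, (pick _ c1 c2), (pick _ L1 L2), (pick _ a1 a2); split.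
  by move=> k; rewrite /pick; case: (fintype.split k).
apply/funext => z; rewrite big_split_ord /=; congr (_ + _); apply: eq_bigr => k _.
  by rewrite /pick -[lshift m2 k]/(unsplit (inl k)) unsplitK.
by rewrite /pick -[rshift m1 k]/(unsplit (inr k)) unsplitK.
Qed.

Lemma inI_sum m (h : 'I_m -> F) : (forall k, I (h k)) -> I (fun z => \sum_(k < m) h k z).
Proof.
elim: m h => [|m IH] h hI.
  by have -> : (fun z => \sum_(k < 0) h k z) = fun _ => 0;
    [apply/funext => z; rewrite big_ord0 | apply: inI0].
have -> : (fun z => \sum_(k < m.+1) h k z) =
    fun z => \sum_(k < m) h (widen_ord (leqnSn m) k) z + h ord_max z.
  by apply/funext => z; rewrite big_ord_recr.
by apply: inID => //; apply: (IH (fun k => h (widen_ord (leqnSn m) k))).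
Qed.

(* Leibniz: D_i (c D_L Delta) = (D_i c) D_L Delta + c D_(L+e_i) Delta. *)
Lemma inI_Dtot i G : I G -> I (Dtot i G).
Proof.
move=> [m [c [L [a [hc ->]]]]].
have hX k : inA (Dmulti (L k) (Delta idx J P (a k))) by apply/inA_Dmulti/inA_Delta.
rewrite Dtot_sum; last by move=> k; apply: inAM.
apply: inI_sum => k; rewrite DtotM // Dtot_Dmulti; last exact: inA_Delta.
by apply: inID; apply: inI_gen => //; apply: inA_Dtot.
Qed.

End Ideal.
End MultiDerivatives.

(** * Reduced forms *)

Section Reduction.
Variables (R : realType) (p q n : nat) (idx : 'I_n -> 'I_q) (J : 'I_n -> mi p)
  (P : 'I_n -> jfun R p q).
Local Notation F := (jfun R p q).
Local Notation reduced := (is_reduced idx J P).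
Local Notation frakD := (frakD idx J P).
Hypothesis P_A : forall a, inA (P a).
Hypothesis ex_unique_reduced : forall Q : F, inA Q -> exists! Rf, reduced Q Rf.

Lemma inB_inA (G : F) : inB idx J G -> inA G.
Proof. by move=> [S [C _]]; exists S. Qed.

Lemma frakD_reduced K (G : F) : inA (Dmulti K G) -> reduced (Dmulti K G) (frakD K G).
Proof.
move=> hA; have [Rf [hR _]] := ex_unique_reduced hA.
exact: (epsilon_spec (inhabits (fun _ => 0)) _ (ex_intro _ Rf hR)).
Qed.

Lemma frakD_eq K (G Rf : F) : inA (Dmulti K G) -> reduced (Dmulti K G) Rf -> frakD K G = Rf.
Proof.
move=> hA hG; have [R0 [hR uR]] := ex_unique_reduced hA.
by rewrite -(uR _ (frakD_reduced hA)) (uR _ hG).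
Qed.

Lemma reduced_Dtot j (H G : F) : inA H -> reduced H G ->
  reduced (Dtot j H) (frakD (munit j) G).
Proof.
move=> hH [hG hI]; have hGA := inB_inA hG.
have [rB rI] := frakD_reduced (inA_Dmulti (munit j) hGA).
rewrite Dmulti_unit // in rI; split=> //.
have -> : (fun z => Dtot j H z - frakD (munit j) G z) =
    fun z => Dtot j (fun z => H z - G z) z + (Dtot j G z - frakD (munit j) G z).
  rewrite DtotD ?DtotN //; last exact: inAN.
  by apply/funext => z; rewrite addrA subrK.
by apply: inID => //; apply: inI_Dtot.
Qed.

Lemma reduced_iter_Dtot j m (H G : F) : inA H -> reduced H G ->
  reduced (iter m (Dtot j) H) (iter m (frakD (munit j)) G).
Proof.
move=> hH hG; elim: m => //= m IH.
by apply: reduced_Dtot => //; apply: inA_iter_Dtot.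
Qed.

Lemma reduced_Dfold (M : mi p) (G : F) s : inB idx J G ->
  reduced (Dfold M s G) (foldr (fun i G => iter (M i) (frakD (munit i)) G) G s).
Proof.
move=> hG; elim: s => [|j s IH] /=.
  split=> //; have -> : (fun z => G z - G z) = fun _ => 0.
    by apply/funext => z; rewrite subrr.
  exact: inI0.
by apply: reduced_iter_Dtot => //; apply/inA_Dfold/inB_inA.
Qed.

End Reduction.

Theorem corollary1 (R : realType) (p q n : nat) (idx : 'I_n -> 'I_q)
  (J : 'I_n -> mi p) (P : 'I_n -> jfun R p q)
  (rk : 'I_q * mi p -> 'I_q * mi p -> Prop) :
  passive_orthonomic idx J P rk ->
  (* existence and uniqueness of reduced forms (stated in the context) *)
  (forall Q : jfun R p q, inA Q -> exists! Rf, is_reduced idx J P Q Rf) ->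
  forall (K : mi p) (F : jfun R p q), inB idx J F ->
  frakD idx J P K F =
  foldr (fun i G => iter (K i) (frakD idx J P (munit i)) G) F (enum 'I_p).
Proof.
(* Passivity is only needed for the existence and uniqueness of reduced forms,
   which is the second hypothesis. *)
move=> [_ _ P_B _ _] ex_unique_reduced K F hF.
have P_A a : inA (P a) by apply: inB_inA (P_B a).
apply: (frakD_eq ex_unique_reduced (inA_Dmulti K (inB_inA hF))).
exact: reduced_Dfold.
Qed.
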